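(* Let $n\in\mathbb N$ and $i,j\in\{1,2\}$. (i) If $n$ is odd and $n\ge 17$, then $r(T_n^i,T_n^j)=2n-7$. (ii) If $n$ is even and $n\ge 12$, then $r(T_n^i,T_n^j)=2n-6$.
   Context: All graphs are finite and simple; a graph ''contains'' $H$ if it has a subgraph isomorphic to $H$. For graphs $G_1,G_2$, the Ramsey number $r(G_1,G_2)$ is the smallest positive integer $N$ such that for every graph $G$ on $N$ vertices, either $G$ contains a copy of $G_1$ or the complement $\overline G$ contains a copy of $G_2$. For $n\ge 5$, $T_n^1$ is the tree with vertex set $\{v_0,\ldots,v_{n-1}\}$ and edges $v_0v_1,\ldots,v_0v_{n-3},v_{n-4}v_{n-2},v_{n-3}v_{n-1}$, and $T_n^2$ is the tree on the same vertex set with edges $v_0v_1,\ldots,v_0v_{n-3},v_{n-3}v_{n-2},v_{n-3}v_{n-1}$. *)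

From mathcomp Require Import all_boot.
Set Implicit Arguments. Unset Strict Implicit. Unset Printing Implicit Defensive.

Definition simple_graph (N : nat) (G : rel 'I_N) : Prop :=
  symmetric G /\ irreflexive G.

Definition compl (N : nat) (G : rel 'I_N) : rel 'I_N :=
  fun x y => (x != y) && ~~ G x y.

Definition contains (N : nat) (G : rel 'I_N) (k : nat) (H : rel 'I_k) : Prop :=
  exists f : 'I_k -> 'I_N, injective f /\ forall u v, H u v -> G (f u) (f v).

Definition ramsey_prop (k1 : nat) (G1 : rel 'I_k1) (k2 : nat) (G2 : rel 'I_k2)
  (N : nat) : Prop :=
  forall G : rel 'I_N, simple_graph G -> contains G G1 \/ contains (compl G) G2.

Definition is_ramsey_number (k1 : nat) (G1 : rel 'I_k1) (k2 : nat)
  (G2 : rel 'I_k2) (r : nat) : Prop :=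
  0 < r /\ ramsey_prop G1 G2 r /\
  (forall N, 0 < N -> N < r -> ~ ramsey_prop G1 G2 N).

Definition symc (n : nat) (b : nat -> nat -> bool) : rel 'I_n :=
  fun u v => b (val u) (val v) || b (val v) (val u).

Definition T1 (n : nat) : rel 'I_n :=
  @symc n (fun a b => ((a == 0) && (1 <= b <= n - 3))
                     || ((a == n - 4) && (b == n - 2))
                     || ((a == n - 3) && (b == n - 1))).

Definition T2 (n : nat) : rel 'I_n :=
  @symc n (fun a b => ((a == 0) && (1 <= b <= n - 3))
                     || ((a == n - 3) && (b == n - 2))
                     || ((a == n - 3) && (b == n - 1))).

Definition T (i n : nat) : rel 'I_n := if i == 1 then @T1 n else @T2 n.

(* Both trees are a star with centre v_0 and n - 3 leaves, plus two further
   vertices hanging from two distinct leaves (T^1) or from one leaf (T^2).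

   In a graph H on 2n - 7 + [n even] vertices some vertex v
   has degree >= n - 3 in H or in its complement (for odd n by the
   handshake lemma).  Suppose deg_H v >= n - 3 but H has no T^i.  Take a
   set X of n - 2 neighbours of v (all of them if deg v = n - 3) and let Y
   be the remaining vertices.  The X-Y edges then contain no 2-matching
   (i = 1), resp. no cherry centred in X (i = 2); hence some y in Y has at
   most one H-neighbour in X.  In the complement, y is the centre of a star
   whose >= n - 3 leaves lie in {v} u X, and at least two of those leaves
   miss at most one vertex of Y \ {y}: this embeds both T^1 and T^2 in the
   complement.

   Lower bound.  Induced subgraphs of a suitable circulant graph have all
   degrees, in the graph and in its complement, at most n - 4, so neither
   contains a tree with a vertex of degree n - 3. *)

From mathcomp Require Import all_boot zify.
From Stdlib Require Import Classical.
Set Implicit Arguments. Unset Strict Implicit. Unset Printing Implicit Defensive.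

Lemma contains_of_nth N n (G : rel 'I_N) (b : nat -> nat -> bool) (sq : seq 'I_N)
    (x0 : 'I_N) :
  symmetric G -> uniq sq -> size sq = n ->
  (forall u v, u < n -> v < n -> b u v -> G (nth x0 sq u) (nth x0 sq v)) ->
  contains G (@symc n b).
Proof.
move=> Gs usq ssq Gb; exists (fun u : 'I_n => nth x0 sq u); split.
- by move=> u v /eqP; rewrite nth_uniq ?ssq // => /eqP /val_inj.
- by move=> u v /orP[] buv; [|rewrite Gs]; apply: Gb.
Qed.

(* Embeddings are listed as y :: L ++ pre ++ t: the centre y, then the
   leaves L ++ pre, then the tail t.  These two facts locate the entries. *)
Lemma nth_frame_head (T : eqType) (y : T) (L pre t : seq T) u :
  0 < u <= size L + size pre -> nth y (y :: L ++ pre ++ t) u \in L ++ pre.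
Proof.
by case: u => // u /= hu; rewrite catA nth_cat size_cat hu mem_nth ?size_cat.
Qed.

Lemma nth_frame_tail (T : Type) (y : T) (L t : seq T) i :
  nth y (y :: L ++ t) (size L + i).+1 = nth y t i.
Proof. by rewrite /= nth_cat ltnNge leq_addr addKn. Qed.

Lemma star_frame N n (S : {set 'I_N}) (y c1 c2 : 'I_N) (pre : seq 'I_N) :
  y \notin S -> uniq pre -> {subset pre <= S} -> c1 \notin S -> c2 \notin S ->
  c1 != y -> c2 != y -> c1 != c2 -> size pre <= n - 3 -> n - 3 <= #|S| ->
  exists L : seq 'I_N, [/\ size L = n - 3 - size pre, {subset L <= S} &
    uniq (y :: L ++ pre ++ [:: c1; c2])].
Proof.
move=> yS upre preS c1S c2S c1y c2y c12 hpre hS.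
have : n - 3 - size pre <= #|S :\: [set x in pre]|.
  have := cardsID [set x in pre] S.
  have /setIidPr -> : [set x in pre] \subset S.
    by apply/subsetP=> x; rewrite inE => /preS.
  by rewrite cardsE (card_uniqP upre) leq_subLR => ->.
case/card_geqP=> L [uL sL LSpre]; exists L.
have LS x : x \in L -> x \in S by move/LSpre; rewrite inE => /andP[].
have preL x : x \in pre -> x \notin L.
  by apply: contraL => /LSpre; rewrite !inE => /andP[].
have notS x : x \notin S -> (x \notin L) && (x \notin pre).
  by move=> xS; apply/andP; split; apply: contra xS; [apply: LS | apply: preS].
have /andP[yL ypre] := notS _ yS.
have /andP[c1L c1pre] := notS _ c1S.
have /andP[c2L c2pre] := notS _ c2S.
split=> //; rewrite cons_uniq !cat_uniq uL upre /= !mem_cat !inE c12 (negbTE yL).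
rewrite (negbTE ypre) (negbTE c1pre) (negbTE c2pre) !(eq_sym y).
rewrite (negbTE c1y) (negbTE c2y) /= andbT.
by apply/hasPn=> x; rewrite mem_cat !inE => /orP[/preL|/orP[]/eqP->].
Qed.

Section StarEmbeddings.
Variables (N n : nat) (G : rel 'I_N) (S : {set 'I_N}) (y : 'I_N).
Hypotheses (Gs : symmetric G) (n5 : 5 <= n) (yS : y \notin S)
  (GyS : {in S, forall s, G y s}) (cardS : n - 3 <= #|S|).

Lemma star_edges (L pre t : seq 'I_N) :
  {subset L <= S} -> {subset pre <= S} -> size L + size pre = n - 3 ->
  forall v, 1 <= v <= n - 3 -> G y (nth y (y :: L ++ pre ++ t) v).
Proof.
move=> LS preS sz v hv; apply: GyS.
have := nth_frame_head y (L := L) (pre := pre) t (u := v); rewrite sz => /(_ hv).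
by rewrite mem_cat => /orP[/LS|/preS].
Qed.

Lemma T1_of_star s1 s2 c1 c2 :
  s1 \in S -> s2 \in S -> s1 != s2 -> c1 \notin S -> c2 \notin S ->
  c1 != y -> c2 != y -> c1 != c2 -> G s1 c1 -> G s2 c2 -> contains G (@T1 n).
Proof.
move=> s1S s2S s12 c1S c2S c1y c2y c12 G1 G2.
have preS : {subset [:: s1; s2] <= S} by apply/allP; rewrite /= s1S s2S.
have upre : uniq [:: s1; s2] by rewrite /= inE s12.
have spre : size [:: s1; s2] <= n - 3 by clear -n5; rewrite /=; lia.
have [L [sL LS uL]] := star_frame yS upre preS c1S c2S c1y c2y c12 spre cardS.
apply: (contains_of_nth (x0 := y) Gs uL).
  by rewrite /= !size_cat sL /=; clear -n5; lia.
have sz : size L + size [:: s1; s2] = n - 3 by rewrite sL /=; clear -n5; lia.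
move=> u v _ _ /orP[/orP[/and3P[/eqP-> v1 v3]|/andP[/eqP-> /eqP->]]|/andP[/eqP-> /eqP->]].
- by apply: (star_edges _ LS preS sz); rewrite v1 v3.
- have -> : n - 4 = (size L + 0).+1 by clear -sL n5; rewrite sL /=; lia.
  have -> : n - 2 = (size L + 2).+1 by clear -sL n5; rewrite sL /=; lia.
  by rewrite !nth_frame_tail.
- have -> : n - 3 = (size L + 1).+1 by clear -sL n5; rewrite sL /=; lia.
  have -> : n - 1 = (size L + 3).+1 by clear -sL n5; rewrite sL /=; lia.
  by rewrite !nth_frame_tail.
Qed.

Lemma T2_of_star s c1 c2 :
  s \in S -> c1 \notin S -> c2 \notin S -> c1 != y -> c2 != y -> c1 != c2 ->
  G s c1 -> G s c2 -> contains G (@T2 n).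
Proof.
move=> sS c1S c2S c1y c2y c12 G1 G2.
have preS : {subset [:: s] <= S} by move=> x; rewrite inE => /eqP->.
have spre : size [:: s] <= n - 3 by clear -n5; rewrite /=; lia.
have [L [sL LS uL]] :=
  star_frame yS (isT : uniq [:: s]) preS c1S c2S c1y c2y c12 spre cardS.
apply: (contains_of_nth (x0 := y) Gs uL).
  by rewrite /= !size_cat sL /=; clear -n5; lia.
have sz : size L + size [:: s] = n - 3 by rewrite sL /=; clear -n5; lia.
move=> u v _ _ /orP[/orP[/and3P[/eqP-> v1 v3]|/andP[/eqP-> /eqP->]]|/andP[/eqP-> /eqP->]].
- by apply: (star_edges _ LS preS sz); rewrite v1 v3.
- have -> : n - 3 = (size L + 0).+1 by clear -sL n5; rewrite sL /=; lia.
  have -> : n - 2 = (size L + 1).+1 by clear -sL n5; rewrite sL /=; lia.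
  by rewrite !nth_frame_tail.
- have -> : n - 3 = (size L + 0).+1 by clear -sL n5; rewrite sL /=; lia.
  have -> : n - 1 = (size L + 2).+1 by clear -sL n5; rewrite sL /=; lia.
  by rewrite !nth_frame_tail.
Qed.

End StarEmbeddings.

Definition nbhd N (G : rel 'I_N) (x : 'I_N) : {set 'I_N} := [set z | G x z].

Lemma compl_sym N (G : rel 'I_N) : symmetric G -> symmetric (compl G).
Proof. by move=> Gs x y; rewrite /compl Gs eq_sym. Qed.

Lemma compl_irr N (G : rel 'I_N) : irreflexive (compl G).
Proof. by move=> x; rewrite /compl eqxx. Qed.

Lemma nbhd_compl N (G : rel 'I_N) x : nbhd (compl G) x = [set~ x] :\: nbhd G x.
Proof. by apply/setP=> z; rewrite !inE /compl andbC eq_sym. Qed.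

Lemma compl_nbhd_in N (G : rel 'I_N) (C : {set 'I_N}) w :
  w \notin C -> #|C :&: nbhd (compl G) w| + #|C :&: nbhd G w| = #|C|.
Proof.
move=> wC; rewrite -(cardsID (nbhd G w) C) addnC; congr (_ + _).
apply: eq_card => z; rewrite nbhd_compl !inE.
case: (z =P w) => [->|_] /=; first by rewrite (negbTE wC) andbF.
by rewrite andbT andbC.
Qed.

Lemma deg_split N (G : rel 'I_N) x :
  irreflexive G -> #|nbhd G x| + #|nbhd (compl G) x| = N - 1.
Proof.
move=> Gi; rewrite subn1 -[N in RHS]card_ord -(cardsC1 x).
rewrite -(cardsID (nbhd G x) [set~ x]) nbhd_compl; congr (_ + _).
by apply/eq_card => z; rewrite !inE; case: (z =P x) => [->|]; rewrite ?Gi.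
Qed.

Lemma contains_T1_T2 N n (G : rel 'I_N) (S C : {set 'I_N}) y w1 w2 :
  symmetric G -> 5 <= n -> y \notin S -> {in S, forall s, G y s} -> n - 3 <= #|S| ->
  C \subset ~: (y |: S) -> w1 \in S -> w2 \in S -> w1 != w2 ->
  1 < #|C :&: nbhd G w1| -> 1 < #|C :&: nbhd G w2| ->
  contains G (@T1 n) /\ contains G (@T2 n).
Proof.
move=> Gs n5 yS GyS cS /subsetP CyS w1S w2S w12.
have outside c : c \in C -> (c \notin S) && (c != y).
  by move/CyS; rewrite !inE negb_or andbC.
case/card_gt1P=> c1 [c1' []]; rewrite !inE => /andP[/outside/andP[c1S c1y] G1].
move=> /andP[/outside/andP[c1'S c1'y] G1'] c11'.
case/card_gt1P=> d [d' []]; rewrite !inE => /andP[dC Gd] /andP[d'C Gd'] dd'.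
have [c2 [/outside/andP[c2S c2y] G2 c12]] :
    exists c2, [/\ c2 \in C, G w2 c2 & c1 != c2].
  by case: (c1 =P d) => [e|/eqP ne]; [exists d'; rewrite e | exists d].
split.
- exact: (T1_of_star Gs n5 yS GyS cS w1S w2S w12 c1S c2S c1y c2y c12 G1 G2).
- exact: (T2_of_star Gs n5 yS GyS cS w1S c1S c1'S c1y c1'y c11' G1 G1').
Qed.

Lemma sum_cross_degrees N (G : rel 'I_N) (X Y : {set 'I_N}) : symmetric G ->
  \sum_(y in Y) #|X :&: nbhd G y| = \sum_(a in X) #|Y :&: nbhd G a|.
Proof.
have cnt (A : {set 'I_N}) z : #|A :&: nbhd G z| = \sum_(a in A) (G z a : nat).
  by rewrite -sum1_card big_mkcond [RHS]big_mkcond; apply: eq_bigr => a _;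
     rewrite !inE; case: (a \in A); case: (G z a).
move=> Gs; under eq_bigr => y _ do rewrite cnt.
rewrite exchange_big; apply: eq_bigr => a _; rewrite cnt.
by apply: eq_bigr => y _; rewrite Gs.
Qed.

Lemma subset_of_card (T : finType) (A : {set T}) k :
  k <= #|A| -> exists2 X : {set T}, X \subset A & #|X| = k.
Proof.
case/card_geqP=> s [us ss sA]; exists [set x in s].
  by apply/subsetP=> x; rewrite inE => /sA.
by rewrite cardsE (card_uniqP us).
Qed.

Section ForbiddenTree.
Variables (N n : nat) (H : rel 'I_N).
Hypotheses (Hs : symmetric H) (Hi : irreflexive H).

(* No two disjoint X-Y edges: what T^1-freeness forbids around a star. *)
Definition no_2matching (X Y : {set 'I_N}) : Prop :=
  forall a1 a2 c1 c2, a1 \in X -> a2 \in X -> a1 != a2 ->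
  c1 \in Y -> c2 \in Y -> c1 != c2 -> H a1 c1 -> H a2 c2 -> False.

(* No vertex of X with two neighbours in Y: what T^2-freeness forbids. *)
Definition no_cherry (X Y : {set 'I_N}) : Prop :=
  {in X, forall a, #|Y :&: nbhd H a| <= 1}.

Definition avoids (i : nat) (X Y : {set 'I_N}) : Prop :=
  if i == 1 then no_2matching X Y else no_cherry X Y.

Definition rich (X Y : {set 'I_N}) : {set 'I_N} :=
  [set a in X | 1 < #|Y :&: nbhd H a|].

Lemma no_2matching_sym X Y : no_2matching X Y -> no_2matching Y X.
Proof.
move=> P c1 c2 a1 a2 c1Y c2Y c12 a1X a2X a12 H1 H2.
by apply: (P a1 a2 c1 c2); rewrite // Hs.
Qed.

Lemma avoids_of_T_free i v (X Y : {set 'I_N}) :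
  i \in [:: 1; 2] -> 5 <= n -> ~ contains H (@T i n) ->
  X \subset nbhd H v -> n - 3 <= #|X| -> Y \subset ~: (v |: X) -> avoids i X Y.
Proof.
move=> hi n5 nC /subsetP XN cX /subsetP YvX.
have vX : v \notin X by apply/negP=> /XN; rewrite inE Hi.
have HvX : {in X, forall x, H v x} by move=> x /XN; rewrite inE.
have outside c : c \in Y -> (c \notin X) && (c != v).
  by move/YvX; rewrite !inE negb_or andbC.
rewrite /avoids; move: hi nC; rewrite !inE /T => /orP[]/eqP-> /= nC.
- move=> a1 a2 c1 c2 a1X a2X a12 /outside/andP[c1X c1v] /outside/andP[c2X c2v] c12.
  move=> H1 H2; apply: nC.
  exact: (T1_of_star Hs n5 vX HvX cX a1X a2X a12 c1X c2X c1v c2v c12 H1 H2).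
- move=> a aX; rewrite leqNgt; apply/negP=> /card_gt1P[c1 [c2 []]].
  rewrite !inE => /andP[/outside/andP[c1X c1v] H1] /andP[/outside/andP[c2X c2v] H2].
  move=> c12; apply: nC.
  exact: (T2_of_star Hs n5 vX HvX cX aX c1X c2X c1v c2v c12 H1 H2).
Qed.

Lemma rich_le1 i X Y : avoids i X Y -> #|rich X Y| <= 1.
Proof.
rewrite /avoids; case: (i == 1) => P; last first.
  suff -> : rich X Y = set0 by rewrite cards0.
  apply/setP=> a; rewrite !inE; apply/negbTE/negP=> /andP[/P le1].
  by rewrite ltnNge le1.
apply/card_le1_eqP=> a1 a2; rewrite !inE => /andP[a1X /card_gt1P[c [c' [cY c'Y cc']]]].
case/andP=> a2X /card_gt1P[d [d' [dY d'Y dd']]]; apply/eqP; apply: contraT => a21.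
move: cY dY d'Y; rewrite !inE => /andP[cY Hc] /andP[dY Hd] /andP[d'Y Hd'].
case: (c =P d) => [e|/eqP ne]; last by case: (P a1 a2 c d) => //; rewrite eq_sym.
by case: (P a1 a2 c d') => //; rewrite ?e // eq_sym.
Qed.

(* If Y is not too small, some vertex of Y has at most one neighbour in X:
   for i = 1 since at most one vertex of Y is rich towards X, for i = 2 by
   double counting the X-Y edges. *)
Lemma poor_vertex i X Y : avoids i X Y -> 1 < #|Y| -> #|X| < 2 * #|Y| ->
  exists2 y, y \in Y & #|X :&: nbhd H y| <= 1.
Proof.
rewrite /avoids; case: ifP => _ P Y1 XY.
  have R1 : #|rich Y X| <= 1 by apply: (@rich_le1 1); apply: no_2matching_sym.
  have : 0 < #|Y :\: rich Y X|.
    have := cardsID (rich Y X) Y; have := subset_leq_card (subsetIr Y (rich Y X)).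
    set a := #|Y :&: _|; set b := #|Y :\: _|; set c := #|rich Y X|; lia.
  by case/card_gt0P=> y; rewrite !inE => /andP[+ yY]; rewrite yY -leqNgt; exists y.
apply/exists_inP; apply: contraT; rewrite negb_exists_in => /forall_inP big.
suff : 2 * #|Y| <= #|X| by rewrite leqNgt XY.
apply: (@leq_trans (\sum_(y in Y) #|X :&: nbhd H y|)).
  by rewrite -sum1_card big_distrr leq_sum // => y /big; rewrite -ltnNge; apply.
by rewrite (sum_cross_degrees X Y Hs) -sum1_card leq_sum // => a /P.
Qed.

(* A set of neighbours of v of size n - 2, or all neighbours if there are
   only n - 3: in the latter case no neighbour of v lies outside X. *)
Lemma truncated_nbhd v : n - 3 <= #|nbhd H v| ->
  exists2 X : {set 'I_N}, X \subset nbhd H v &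
    [/\ n - 3 <= #|X|, #|X| <= n - 2 &
        forall y, y \notin X -> H v y -> n - 2 <= #|X|].
Proof.
move=> dv; have [X XN cX] := subset_of_card (geq_minl #|nbhd H v| (n - 2)).
exists X => //; split; first by rewrite cX leq_min dv; lia.
  by rewrite cX geq_minr.
move=> y yX Hvy; case: (leqP (n - 2) #|nbhd H v|) => [big | small].
  by rewrite cX (minn_idPr big).
have /eqP XE : X == nbhd H v by rewrite eqEcard XN cX leq_min leqnn ltnW.
by move: yX; rewrite XE inE Hvy.
Qed.

Lemma nonneighbour_leaves v (X : {set 'I_N}) y :
  v \notin X -> #|X :&: nbhd H y| <= 1 -> (H y v -> n - 2 <= #|X|) ->
  n - 3 <= #|X| -> n - 3 <= #|(v |: X) :\: nbhd H y|.
Proof.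
move=> vX yX1 full cX.
have sub : X :\: nbhd H y \subset (v |: X) :\: nbhd H y by apply/setSD/subsetUr.
have cXy : #|X| - 1 <= #|X :\: nbhd H y|.
  by have := cardsID (nbhd H y) X; set a := #|X :&: _|; set b := #|X :\: _|; lia.
have := subset_leq_card sub; case: (boolP (H y v)) => [/full|Hyv].
  by set a := #|_ :\: _|; set b := #|(v |: X) :\: _|; lia.
have sub' : v |: (X :\: nbhd H y) \subset (v |: X) :\: nbhd H y.
  by rewrite subUset sub andbT sub1set !inE eqxx Hyv.
have := subset_leq_card sub'; rewrite cardsU1 !inE (negbTE vX) andbF /=.
by set a := #|X :\: _|; set b := #|(v |: X) :\: _|; lia.
Qed.

(* Among >= 4 vertices of v |: X at least two are neither v nor rich
   towards C; each of them misses at most one vertex of C. *)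
Lemma two_poor_leaves i v X (S C : {set 'I_N}) :
  avoids i X C -> S \subset v |: X -> C \subset ~: (v |: X) ->
  4 <= #|S| -> 3 <= #|C| ->
  exists w1 w2, [/\ w1 \in S, w2 \in S, w1 != w2,
    1 < #|C :&: nbhd (compl H) w1| & 1 < #|C :&: nbhd (compl H) w2|].
Proof.
move=> P /subsetP SvX /subsetP CvX cS cC.
set W := S :\: (v |: rich X C).
have : 1 < #|W|.
  have cB : #|v |: rich X C| <= 2.
    by rewrite cardsU1; apply: leq_trans (leq_add (leq_b1 _) (rich_le1 P)) _.
  have cSB := leq_trans (subset_leq_card (subsetIr S (v |: rich X C))) cB.
  rewrite -(leq_add2l #|S :&: (v |: rich X C)|) cardsID.
  exact: leq_trans (leq_add cSB (leqnn 2)) cS.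
have poor w : w \in W -> 1 < #|C :&: nbhd (compl H) w|.
  rewrite !inE negb_or => /andP[/andP[wv wR] wS].
  have /SvX wvX := wS; have wX : w \in X by move: wvX; rewrite !inE (negbTE wv).
  have wC : w \notin C by apply: contraL wvX => /CvX; rewrite inE => ->.
  move: wR; rewrite wX /= -leqNgt => le1.
  rewrite -(leq_add2r #|C :&: nbhd H w|) compl_nbhd_in //.
  exact: leq_trans (leq_add (leqnn 2) le1) cC.
have inS w : w \in W -> w \in S by rewrite inE => /andP[].
case/card_gt1P=> w1 [w2 [w1W w2W w12]].
by exists w1, w2; split; rewrite ?inS ?poor.
Qed.

Lemma compl_contains_trees i v :
  i \in [:: 1; 2] -> 12 <= n -> 2 * n - 7 <= N ->
  n - 3 <= #|nbhd H v| -> ~ contains H (@T i n) ->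
  contains (compl H) (@T1 n) /\ contains (compl H) (@T2 n).
Proof.
move=> hi n12 hN dv nC; have n5 : 5 <= n by lia.
have [X XN [cX3 cX2 full]] := truncated_nbhd dv.
have vX : v \notin X by apply/negP=> /(subsetP XN); rewrite inE Hi.
set Y := ~: (v |: X).
have cY : #|Y| + #|X| = N - 1.
  have := cardsC (v |: X); rewrite cardsU1 vX card_ord -/Y add1n => e.
  by rewrite -[X in _ = X - 1]e addSn subn1 addnC.
have [y yY yX1] : exists2 y, y \in Y & #|X :&: nbhd H y| <= 1.
  apply: (poor_vertex (avoids_of_T_free hi n5 nC XN cX3 (subxx Y)));
  by set a := #|Y|; set b := #|X|; lia.
have /andP[yX yv] : (y \notin X) && (y != v) by move: yY; rewrite !inE negb_or andbC.
set S := (v |: X) :\: nbhd H y.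
have yS : y \notin S by rewrite !inE (negbTE yv) (negbTE yX) andbF.
have GyS : {in S, forall s, compl H y s}.
  move=> s; rewrite !inE /compl => /andP[-> svX]; rewrite andbT.
  by apply: contraTneq svX => <-; rewrite (negbTE yv) (negbTE yX).
have cS : n - 3 <= #|S|.
  by apply: nonneighbour_leaves => // Hyv; apply: full yX _; rewrite Hs.
set C := Y :\ y.
have CY : C \subset Y by apply: subD1set.
have cC : 3 <= #|C| by have := cardsD1 y Y; rewrite yY; set a := #|Y|; set b := #|C|; lia.
have CyS : C \subset ~: (y |: S).
  apply/subsetP=> c; rewrite in_setD1 => /andP[cy cinY].
  have cvX : c \notin v |: X by rewrite -in_setC.
  by rewrite in_setC in_setU1 negb_or cy /=; apply: contra cvX => /setDP[].
have leaves4 : 4 <= n - 3 by lia.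
have [w1 [w2 [w1S w2S w12 g1 g2]]] :=
  two_poor_leaves (avoids_of_T_free hi n5 nC XN cX3 CY) (subsetDl _ _) CY
    (leq_trans leaves4 cS) cC.
exact: (contains_T1_T2 (compl_sym Hs) n5 yS GyS cS CyS w1S w2S w12 g1 g2).
Qed.
End ForbiddenTree.

Lemma handshake N (G : rel 'I_N) : symmetric G -> irreflexive G ->
  ~~ odd (\sum_(x : 'I_N) #|nbhd G x|).
Proof.
move=> Gs Gi; pose up (x y : 'I_N) : nat := (x < y) && G x y.
have split_deg x : #|nbhd G x| = \sum_y up x y + \sum_y up y x.
  rewrite -big_split -sum1_card big_mkcond; apply: eq_bigr => y _.
  rewrite inE /up (Gs y x).
  by case: (ltngtP x y) => [||/val_inj->]; rewrite ?Gi //=; case: (G x y).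
rewrite (eq_bigr _ (fun x _ => split_deg x)) big_split /=.
by rewrite [X in _ + X]exchange_big addnn odd_double.
Qed.

(* On 2n - 7 + [n even] vertices some vertex has degree >= n - 3 in G or in
   its complement; for odd n, otherwise G would be (n - 4)-regular on an
   odd number of vertices with n - 4 odd, against the handshake lemma. *)
Lemma high_degree_vertex N n (G : rel 'I_N) :
  symmetric G -> irreflexive G -> 5 <= n -> N = 2 * n - 7 + ~~ odd n ->
  exists v, (n - 3 <= #|nbhd G v|) || (n - 3 <= #|nbhd (compl G) v|).
Proof.
move=> Gs Gi n5 eN; apply/existsP; apply: contraT.
rewrite negb_exists => /forallP low.
have degs x : [/\ #|nbhd G x| < n - 3, #|nbhd (compl G) x| < n - 3
               & #|nbhd G x| + #|nbhd (compl G) x| = N - 1].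
  by have := low x; rewrite negb_or -!ltnNge => /andP[]; split; rewrite ?deg_split.
have N0 : 0 < N by rewrite eN; case: (odd n) => /=; lia.
have on : odd n.
  have [] := degs (Ordinal N0); set a := #|nbhd G _|; set b := #|nbhd (compl G) _|.
  by case: (odd n) eN => //= eN ha hb e; lia.
have reg x : #|nbhd G x| = n - 4.
  have [] := degs x; set a := #|nbhd G _|; set b := #|nbhd (compl G) _|.
  by rewrite on /= in eN => ha hb e; lia.
have := handshake Gs Gi; rewrite (eq_bigr _ (fun x _ => reg x)) sum_nat_const card_ord.
by rewrite eN on /= addn0 oddM !oddB ?oddM ?on //; lia.
Qed.

Lemma T_of_T1_T2 N n j (G : rel 'I_N) : j \in [:: 1; 2] ->
  contains G (@T1 n) -> contains G (@T2 n) -> contains G (@T j n).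
Proof. by rewrite !inE /T => /orP[]/eqP->. Qed.

Lemma contains_of_compl_compl N k (G : rel 'I_N) (K : rel 'I_k) :
  contains (compl (compl G)) K -> contains G K.
Proof.
case=> f [finj fK]; exists f; split=> // u v /fK.
by rewrite /compl => /andP[nuv]; rewrite nuv negbK.
Qed.

Lemma ramsey_upper N n i j : i \in [:: 1; 2] -> j \in [:: 1; 2] -> 12 <= n ->
  N = 2 * n - 7 + ~~ odd n -> ramsey_prop (@T i n) (@T j n) N.
Proof.
move=> hi hj n12 eN G [Gs Gi].
have hN : 2 * n - 7 <= N by rewrite eN leq_addr.
have n5 : 5 <= n by lia.
have [v /orP[dv|dv]] := high_degree_vertex Gs Gi n5 eN.
- have [|nC] := classic (contains G (@T i n)); first by left.
  have [c1 c2] := compl_contains_trees Gs Gi hi n12 hN dv nC.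
  by right; apply: T_of_T1_T2.
- have [|nC] := classic (contains (compl G) (@T j n)); first by right.
  have [c1 c2] := compl_contains_trees (compl_sym Gs) (@compl_irr _ G) hj n12 hN dv nC.
  by left; apply: contains_of_compl_compl; apply: T_of_T1_T2.
Qed.

Lemma card_le_inj (T : finType) (A : {set T}) (phi : T -> nat) m :
  {in A &, injective phi} -> {in A, forall x, phi x < m} -> #|A| <= m.
Proof.
move=> inj lt; rewrite cardE -(size_map phi) -(size_iota 0 m); apply: uniq_leq_size.
  by rewrite map_inj_in_uniq ?enum_uniq // => x y; rewrite !mem_enum; apply: inj.
by move=> z /mapP[x]; rewrite mem_enum => xA ->; rewrite mem_iota /= lt.
Qed.

Definition offset (M x y : nat) : nat := if x <= y then y - x else y + M - x.

(* The circulant graph on Z/MZ joining points at cyclic distance <= k,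
   restricted to its first N points. *)
Definition circulant (M k N : nat) : rel 'I_N := fun x y =>
  (0 < offset M x y) && ((offset M x y <= k) || (M - k <= offset M x y)).

Lemma offset_lt M x y : y < M -> offset M x y < M.
Proof. by rewrite /offset; case: (leqP x y); lia. Qed.

Lemma offset_pos M x y : x < M -> y < M -> (0 < offset M x y) = (x != y).
Proof. by rewrite /offset; case: (leqP x y); case: eqP; lia. Qed.

Lemma offset_inj M x y z :
  x < M -> y < M -> z < M -> offset M x y = offset M x z -> y = z.
Proof. by rewrite /offset; case: (leqP x y); case: (leqP x z); lia. Qed.

Section Circulant.
Variables (M k N : nat).
Hypothesis NM : N <= M.

Let small (x : 'I_N) : x < M := leq_trans (ltn_ord x) NM.

Lemma circulant_sym : symmetric (@circulant M k N).
Proof.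
move=> x y; have := small x; have := small y; rewrite /circulant /offset.
by case: (leqP x y); case: (leqP y x) => h1 h2 hy hx; apply/idP/idP; lia.
Qed.

Lemma circulant_irr : irreflexive (@circulant M k N).
Proof. by move=> x; rewrite /circulant offset_pos ?small // eqxx. Qed.

(* Neighbours have offset in [1, k] or [M - k, M), 2k values in all. *)
Lemma circulant_deg x : #|nbhd (@circulant M k N) x| <= 2 * k.
Proof.
pose code d := if d <= k then d - 1 else d + 2 * k - M.
have near y : @circulant M k N x y -> [/\ 0 < offset M x y, offset M x y < M &
    (offset M x y <= k) || (M - k <= offset M x y)].
  by case/andP=> p a; split; rewrite ?offset_lt ?small.
apply: (@card_le_inj _ _ (fun y : 'I_N => code (offset M x y))) => [y z|y].
  rewrite !inE /code => /near[py ly ay] /near[pz lz az] e.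
  apply/val_inj/(offset_inj (small x) (small y) (small z)); move: e ay az.
  by case: (leqP (offset M x y) k); case: (leqP (offset M x z) k); lia.
rewrite inE /code => /near[py ly ay].
by case: (leqP (offset M x y) k) ay; lia.
Qed.

(* Non-neighbours have offset in (k, M - k), M - 2k - 1 values in all. *)
Lemma circulant_compl_deg x :
  #|nbhd (compl (@circulant M k N)) x| <= M - 2 * k - 1.
Proof.
have far y : compl (@circulant M k N) x y -> k < offset M x y < M - k.
  rewrite /compl /circulant -(offset_pos (M := M)) ?small // => /andP[-> /=].
  by rewrite negb_or -!ltnNge.
apply: (@card_le_inj _ _ (fun y : 'I_N => offset M x y - k - 1)) => [y z|y].
  rewrite !inE => /far fy /far fz e.
  by apply/val_inj/(offset_inj (small x) (small y) (small z)); lia.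
by rewrite inE => /far; lia.
Qed.
End Circulant.

(* T^i has a vertex of degree n - 3, so it does not embed in a graph of
   maximum degree <= n - 4. *)
Lemma no_T_of_low_degree N n i (G : rel 'I_N) : i \in [:: 1; 2] -> 5 <= n ->
  (forall x, #|nbhd G x| <= n - 4) -> ~ contains G (@T i n).
Proof.
move=> hi n5 low [f [finj fT]].
have n0 : 0 < n by lia.
have leaf (l : 'I_(n - 3)) : l.+1 < n by have := ltn_ord l; lia.
have center_leaf l : @T i n (Ordinal n0) (Ordinal (leaf l)).
  have := ltn_ord l; move: hi; rewrite !inE /T /T1 /T2 /symc /=.
  by case/orP=> /eqP-> /= ->.
have leaves : [set f (Ordinal (leaf l)) | l : 'I_(n - 3)] \subset nbhd G (f (Ordinal n0)).
  by apply/subsetP=> z /imsetP[l _ ->]; rewrite inE; apply/fT/center_leaf.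
have := subset_leq_card leaves; rewrite card_imset ?card_ord.
  by move=> /leq_trans/(_ (low _)); lia.
by move=> l l' /finj /(congr1 val) [] /val_inj.
Qed.

(* Lower bound: below 2n - 7 + [n even] vertices the circulant graph with
   M = 2n - 8 + [n even] and k = n/2 - 2 is a counterexample. *)
Lemma ramsey_lower N n i j : i \in [:: 1; 2] -> j \in [:: 1; 2] -> 5 <= n ->
  N <= 2 * n - 8 + ~~ odd n -> ~ ramsey_prop (@T i n) (@T j n) N.
Proof.
move=> hi hj n5 hN R.
set M := 2 * n - 8 + ~~ odd n; set k := n./2 - 2.
have k1 : 2 * k <= n - 4 by rewrite /k; have := odd_double_half n; lia.
have k2 : M - 2 * k - 1 <= n - 4.
  by rewrite /M /k; have := odd_double_half n; case: (odd n) => /=; lia.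
case: (R _ (conj (circulant_sym k hN) (circulant_irr k hN))) => C.
- apply: (no_T_of_low_degree hi n5 _ C) => x.
  exact: leq_trans (circulant_deg k hN x) k1.
- apply: (no_T_of_low_degree hj n5 _ C) => x.
  exact: leq_trans (circulant_compl_deg k hN x) k2.
Qed.

Lemma ramsey_T n i j : i \in [:: 1; 2] -> j \in [:: 1; 2] -> 12 <= n ->
  is_ramsey_number (@T i n) (@T j n) (2 * n - 7 + ~~ odd n).
Proof.
move=> hi hj n12; split; first by case: (odd n) => /=; lia.
split; first exact: ramsey_upper.
move=> N _ ltN; apply: ramsey_lower => //; first by lia.
by move: ltN; case: (odd n) => /=; lia.
Qed.

Theorem theorem4p1 (n i j : nat) (hi : i \in [:: 1; 2]) (hj : j \in [:: 1; 2]) :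
  (odd n -> 17 <= n -> is_ramsey_number (@T i n) (@T j n) (2 * n - 7)) /\
  (~~ odd n -> 12 <= n -> is_ramsey_number (@T i n) (@T j n) (2 * n - 6)).
Proof.
split=> [on n17 | en n12].
- have n12 : 12 <= n by lia.
  by have := ramsey_T hi hj n12; rewrite on addn0.
- have := ramsey_T hi hj n12; rewrite (negbTE en) /=.
  by rewrite (_ : 2 * n - 7 + 1 = 2 * n - 6) //; lia.
Qed.
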